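(* Let $G$ be a BDH graph with color classes $X$ and $Y$. Then each of the 2-sections of the hypergraphs $\mathcal{N}_X(G)$, $\mathcal{N}_X(G)^\uparrow$, $\mathcal{N}_Y(G)$ and $\mathcal{N}_Y(G)^\uparrow$ is a Ptolemaic graph.
   Context: $\mathcal{N}_X(G)=(N(y)\mid y\in Y)$ is the family of neighborhoods of vertices of $Y$, a hypergraph on $X$; $\mathcal{N}_Y(G)=(N(x)\mid x\in X)$ is defined symmetrically on $Y$. For a hypergraph $\mathcal{H}$, $\mathcal{H}^\uparrow$ is obtained by identifying equal members and keeping only inclusion-wise maximal members. The 2-section of a hypergraph $\mathcal{H}$ on $V$ is the graph on $V$ in which $u\neq v$ are adjacent iff some member of $\mathcal{H}$ contains both. A Ptolemaic graph is a graph that is both chordal (no induced chordless cycle of length $\ge4$) and distance hereditary. A graph is distance hereditary if distances in every connected induced subgraph equal distances in the graph; BDH means bipartite distance hereditary. *)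

From mathcomp Require Import all_boot.
Set Implicit Arguments. Unset Strict Implicit. Unset Printing Implicit Defensive.

Section Graphs.
Variable T : finType.

(* A graph is given by a vertex set V : {set T} and an adjacency relation r : rel T
   (only its restriction to V matters). *)

Definition walk_in (S : {set T}) (r : rel T) (u v : T) (p : seq T) : bool :=
  [&& path r u p, all (fun w => w \in S) (u :: p) & last u p == v].

Definition is_dist (S : {set T}) (r : rel T) (u v : T) (d : nat) : Prop :=
  (exists p, walk_in S r u v p /\ size p = d) /\
  (forall p, walk_in S r u v p -> d <= size p).

Definition connected_in (S : {set T}) (r : rel T) : Prop :=
  forall u v, u \in S -> v \in S -> exists p, walk_in S r u v p.

Definition distance_hereditary (V : {set T}) (r : rel T) : Prop :=
  forall S : {set T}, S \subset V -> connected_in S r ->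
  forall u v, u \in S -> v \in S ->
  forall d, is_dist S r u v d <-> is_dist V r u v d.

Definition chordless_cycle (V : {set T}) (r : rel T) (c : seq T) : bool :=
  [&& uniq c, all (fun w => w \in V) c, cycle r c &
      all (fun x => all (fun y => r x y ==> ((y == next c x) || (x == next c y))) c) c].

Definition chordal (V : {set T}) (r : rel T) : Prop :=
  forall c : seq T, 4 <= size c -> ~~ chordless_cycle V r c.

Definition ptolemaic (V : {set T}) (r : rel T) : Prop :=
  chordal V r /\ distance_hereditary V r.

Definition two_section (H : {set {set T}}) : rel T :=
  fun u v => (u != v) && [exists A in H, (u \in A) && (v \in A)].

(* H^up : identify equal members (automatic for a set) and keep inclusion-wise maximal ones *)
Definition hyp_up (H : {set {set T}}) : {set {set T}} :=
  [set A in H | [forall B in H, ~~ (A \proper B)]].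

Definition nbhd (e : rel T) (x : T) : {set T} := [set z | e x z].

(* N_X(G) = (N(y) | y in Y), a hypergraph on X *)
Definition nbhd_hyp (e : rel T) (Y : {set T}) : {set {set T}} :=
  [set nbhd e y | y in Y].

Definition simple_graph (e : rel T) : Prop := symmetric e /\ irreflexive e.

Definition bipartition (e : rel T) (X : {set T}) : Prop :=
  forall u v, e u v -> (u \in X) != (v \in X).

End Graphs.

From mathcomp Require Import all_boot zify.
Set Implicit Arguments. Unset Strict Implicit. Unset Printing Implicit Defensive.

(* Since X is a colour class, two vertices of X lie in a common neighbourhood
   N(y), y in Y, iff they are at distance 2 in G; so the 2-section of N_X(G)
   (and of N_X(G)^up, whose maximal members cover the same pairs) is the
   half-square G^2[X].  A walk of G^2[X] lifts to a G-walk of twice the length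
   through common neighbours, and a G-walk between vertices of X projects back;
   hence distances in an induced subgraph G^2[S] are half the distances in
   G[S + N(S)], and distance heredity passes from G to G^2[X].  For
   chordality, take a chordless cycle x_0 ... x_(n-1), n >= 4, of G^2[X]: the
   cycle together with the common neighbours of x_i and x_(i+1), i < n-1,
   induces a connected subgraph of G, in which distance heredity yields a
   common neighbour of x_(n-1) and x_0.  That vertex is then adjacent to three
   cycle vertices, which form a triangle of G^2[X], a chord. *)

Section Walks.
Variable T : finType.
Implicit Types (S : {set T}) (r : rel T) (u v w : T) (p q : seq T).

Lemma walk_in_nil S r u : u \in S -> walk_in S r u u [::].
Proof. by move=> uS; rewrite /walk_in /= uS eqxx. Qed.

Lemma walk_in_cons S r u v w p :
  u \in S -> r u w -> walk_in S r w v p -> walk_in S r u v (w :: p).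
Proof.
by move=> uS uw /and3P[wp Sp lp]; apply/and3P; split=> //=; rewrite ?uw ?uS.
Qed.

Lemma walk_in_cat S r u v w p q :
  walk_in S r u v p -> walk_in S r v w q -> walk_in S r u w (p ++ q).
Proof.
rewrite /walk_in => /and3P[hp ap /eqP lp] /and3P[hq aq /eqP lq].
apply/and3P; split.
- by rewrite cat_path hp lp.
- by rewrite -cat_cons all_cat ap; move: aq => /= /andP[_ ->].
- by rewrite last_cat lp lq.
Qed.

Lemma walk_in_rev S r u v p : symmetric r ->
  walk_in S r u v p -> walk_in S r v u (rev (belast u p)).
Proof.
move=> sr /and3P[hp ap /eqP lp]; apply/and3P; split.
- by rewrite -lp rev_path -(@eq_path _ r) // => a b; apply: sr.
- by move: ap; rewrite lastI all_rcons lp /= all_rev => /andP[-> ->].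
- by case: p hp ap lp => [|y s] /= _ _; [move=> -> | rewrite rev_cons last_rcons].
Qed.

Lemma walk_in_last_mem S r u v p : walk_in S r u v p -> v \in S.
Proof. by case/and3P=> _ /allP Sp /eqP <-; apply/Sp/mem_last. Qed.

Lemma walk_in_sub S S' r u v p :
  S \subset S' -> walk_in S r u v p -> walk_in S' r u v p.
Proof.
move=> sS /and3P[hp ap lp]; apply/and3P; split => //.
by apply: sub_all ap => z; apply: (subsetP sS).
Qed.

Lemma is_dist_exists S r u v :
  (exists p, walk_in S r u v p) -> exists d, is_dist S r u v d.
Proof.
move=> [p wp].
pose P n := [exists q : n.-tuple T, walk_in S r u v q].
have exP : exists n, P n by exists (size p); apply/existsP; exists (in_tuple p).
case: (ex_minnP exP) => d /existsP[q wq] mind.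
exists d; split; first by exists q; rewrite size_tuple.
by move=> q' wq'; apply: mind; apply/existsP; exists (in_tuple q').
Qed.

Lemma is_dist_uniq S r u v d1 d2 :
  is_dist S r u v d1 -> is_dist S r u v d2 -> d1 = d2.
Proof.
move=> [[p1 [w1 <-]] m1] [[p2 [w2 <-]] m2].
by apply/eqP; rewrite eqn_leq m1 // m2.
Qed.

Lemma connected_in_hub S r a : symmetric r ->
  (forall z, z \in S -> exists p, walk_in S r z a p) -> connected_in S r.
Proof.
move=> sr hub u v uS vS; have [[p wp] [q wq]] := (hub u uS, hub v vS).
by exists (p ++ rev (belast v q)); apply: walk_in_cat wp (walk_in_rev sr wq).
Qed.

End Walks.

Section Hypergraphs.
Variable T : finType.

Definition half_square (e : rel T) : rel T :=
  fun u v => (u != v) && [exists y, e u y && e y v].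

Lemma two_section_hyp_up (H : {set {set T}}) :
  two_section (hyp_up H) =2 two_section H.
Proof.
move=> u v; rewrite /two_section; congr (_ && _).
apply/existsP/existsP => [[A /andP[hA uvA]] | [A /andP[hA /andP[uA vA]]]].
  by exists A; move: hA; rewrite inE => /andP[-> _].
have [B /maxsetP[hB maxB] AB] := @maxset_exists T (fun B => B \in H) A hA.
exists B; rewrite inE hB (subsetP AB _ uA) (subsetP AB _ vA) !andbT.
apply/forall_inP => B' hB'; apply/negP => /properP[BB' [z zB' zB]].
by move: zB; rewrite -(maxB B' hB' BB') zB'.
Qed.

Lemma two_section_nbhd_hyp (e : rel T) (X : {set T}) u v :
  symmetric e -> bipartition e X -> u \in X -> v \in X ->
  two_section (nbhd_hyp e (~: X)) u v = half_square e u v.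
Proof.
move=> esym bip uX vX; rewrite /two_section /half_square; congr (_ && _).
apply/existsP/existsP => [[A /andP[/imsetP[y _ ->] /andP[]]] | [y /andP[uy yv]]].
  by rewrite !inE => uy yv; exists y; rewrite esym uy.
exists (nbhd e y); rewrite !inE -(esym u) uy yv !andbT.
apply/imsetP; exists y => //; rewrite inE.
by move: (bip u y uy); rewrite uX; case: (y \in X).
Qed.

End Hypergraphs.

Section ChordlessCycles.
Variables (T : finType) (V : {set T}) (r : rel T) (c : seq T) (x0 : T).
Hypothesis chc : chordless_cycle V r c.
Local Notation n := (size c).
Local Notation x i := (nth x0 c i).

Lemma chordless_cycle_uniq : uniq c.
Proof. by case/and4P: chc. Qed.

Lemma nth_cycle_inj i j : i < n -> j < n -> x i = x j -> i = j.
Proof. by move=> hi hj /eqP; rewrite nth_uniq ?chordless_cycle_uniq // => /eqP. Qed.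

Lemma next_nth_cycle i : i < n -> next c (x i) = x (if i.+1 < n then i.+1 else 0).
Proof.
move=> hi; rewrite next_nth mem_nth // index_uniq ?chordless_cycle_uniq //.
case: c hi => [//|y p] /= hi.
case: ifP => h /=; first exact: set_nth_default.
by rewrite nth_default // leqNgt -ltnS h.
Qed.

Lemma cycle_nth_rel i : i < n -> r (x i) (x (if i.+1 < n then i.+1 else 0)).
Proof.
case/and4P: chc => _ _ cc _ hi.
by rewrite -next_nth_cycle //; apply: (next_cycle cc); apply: mem_nth.
Qed.

Lemma chordless_cycle_adj i j : i < n -> j < n -> r (x i) (x j) ->
  [\/ j = i.+1, i = n.-1 /\ j = 0, i = j.+1 | j = n.-1 /\ i = 0].
Proof.
case/and4P: chc => _ _ _ /allP ch hi hj rij.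
have succ_lt k : k < n -> (if k.+1 < n then k.+1 else 0) < n.
  by case: (ltnP k.+1 n) => // _; lia.
have := allP (ch _ (mem_nth x0 hi)) _ (mem_nth x0 hj).
rewrite rij !next_nth_cycle // => /orP[] /eqP /nth_cycle_inj.
- move=> /(_ hj (succ_lt i hi)); case: (ltnP i.+1 n) => hs ->.
  + by constructor 1.
  + by constructor 2; split=> //; lia.
- move=> /(_ hi (succ_lt j hj)); case: (ltnP j.+1 n) => hs ->.
  + by constructor 3.
  + by constructor 4; split=> //; lia.
Qed.

Lemma chordless_cycle_no_triangle i j k : 4 <= n -> i < j -> j < k -> k < n ->
  r (x i) (x j) -> r (x j) (x k) -> r (x i) (x k) -> False.
Proof.
move=> n4 ij jk kn rij rjk rik.
have := chordless_cycle_adj _ _ rij; have := chordless_cycle_adj _ _ rjk.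
have := chordless_cycle_adj _ _ rik.
move=> /(_ ltac:(lia) kn) adj_ik /(_ ltac:(lia) kn) adj_jk /(_ ltac:(lia) ltac:(lia)) adj_ij.
by case: adj_ik; case: adj_jk; case: adj_ij; lia.
Qed.

End ChordlessCycles.

Section HalfSquare.
Variables (T : finType) (e : rel T) (X : {set T}) (r : rel T).
Hypotheses (esym : symmetric e) (bip : bipartition e X).
Hypothesis dhG : distance_hereditary [set: T] e.
Hypothesis r_half : forall u v, u \in X -> v \in X -> r u v = half_square e u v.
Implicit Types (S : {set T}) (u v x y : T) (p q : seq T).

Lemma edge_from_X u y : u \in X -> e u y -> y \notin X.
Proof. by move=> uX /bip; rewrite uX; case: (y \in X). Qed.

Lemma edge_to_X y v : y \notin X -> e y v -> v \in X.
Proof. by move=> /negPf yX /bip; rewrite yX; case: (v \in X). Qed.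

Lemma common_nbr_half_square u v y :
  u \in X -> v \in X -> u != v -> e u y -> e y v -> r u v.
Proof.
by move=> uX vX uv uy yv; rewrite r_half // /half_square uv; apply/existsP; exists y; rewrite uy.
Qed.

Lemma half_square_walk_lift S S' u v p :
  S \subset X -> S \subset S' -> (forall x y, x \in S -> e x y -> y \in S') ->
  walk_in S r u v p -> exists2 q, walk_in S' e u v q & size q = (size p).*2.
Proof.
move=> SX SS' NS; elim: p u => [|w p IH] u /and3P[/= rp Sp /eqP lp].
  by move: Sp lp => /= /andP[uS _] <-; exists [::]; rewrite ?walk_in_nil ?(subsetP SS').
move: rp Sp lp => /andP[ruw wp] /and3P[uS wS Sp] /= lp.
move: ruw; rewrite r_half ?(subsetP SX) // => /andP[_ /existsP[y /andP[uy yw]]].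
have [q wq sq] : exists2 q, walk_in S' e w v q & size q = (size p).*2.
  by apply: IH; rewrite /walk_in wp /= wS Sp lp eqxx.
exists [:: y, w & q]; last by rewrite /= sq doubleS.
exact: walk_in_cons (subsetP SS' _ uS) uy (walk_in_cons (NS _ _ uS uy) yw wq).
Qed.

Lemma half_square_walk_proj S S' u v q :
  S \subset X -> X :&: S' \subset S -> u \in S -> v \in X ->
  walk_in S' e u v q -> exists2 p, walk_in S r u v p & (size p).*2 <= size q.
Proof.
move=> SX XS'S; have [n] := ubnP (size q); elim: n q u => // n IH q u sqn uS vX.
case: q sqn => [|y [|w q]] sqn /and3P[/= qp S'q /eqP lq].
- by exists [::]; rewrite // -lq walk_in_nil.
- move: qp lq => /andP[uy _] /= yv.
  by move: (edge_from_X (subsetP SX _ uS) uy); rewrite yv vX.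
move: qp S'q lq => /and3P[uy yw wq] /and4P[_ _ wS' S'q] /= lq.
have wX : w \in X := edge_to_X (edge_from_X (subsetP SX _ uS) uy) yw.
have wS : w \in S by apply: (subsetP XS'S); rewrite inE wX.
have [p wp sp] : exists2 p, walk_in S r w v p & (size p).*2 <= size q.
  apply: IH => //; first by move: sqn; rewrite /= ltnS => /ltnW.
  by rewrite /walk_in wq /= wS' S'q lq eqxx.
case: (eqVneq u w) => [->|uw]; first by exists p => //=; apply: leq_trans sp (leqW (leqnSn _)).
exists (w :: p); last by rewrite /= doubleS !ltnS.
exact: walk_in_cons uS (common_nbr_half_square (subsetP SX _ uS) wX uw uy yw) wp.
Qed.

Lemma is_dist_half_square S S' u v d :
  S \subset X -> S \subset S' -> X :&: S' \subset S ->
  (forall x y, x \in S -> e x y -> y \in S') ->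
  u \in S -> is_dist S r u v d -> is_dist S' e u v d.*2.
Proof.
move=> SX SS' XS'S NS uS [[p [wp <-]] minp]; split.
  by have [q wq sq] := half_square_walk_lift SX SS' NS wp; exists q.
move=> q wq.
have [p' wp' sp'] := half_square_walk_proj SX XS'S uS (subsetP SX _ (walk_in_last_mem wp)) wq.
by apply: leq_trans sp'; rewrite leq_double; apply: minp.
Qed.

Definition closed_nbhd (S : {set T}) : {set T} := S :|: [set y | [exists x in S, e x y]].

Lemma closed_nbhd_edge S x y : x \in S -> e x y -> y \in closed_nbhd S.
Proof. by move=> xS xy; rewrite !inE; apply/orP; right; apply/existsP; exists x; rewrite xS. Qed.

Lemma closed_nbhd_side S : S \subset X -> X :&: closed_nbhd S \subset S.
Proof.
move=> SX; apply/subsetP => y; rewrite !inE => /andP[yX /orP[//|/existsP[x /andP[xS xy]]]].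
by move: (edge_from_X (subsetP SX _ xS) xy); rewrite yX.
Qed.

Lemma connected_in_closed_nbhd S :
  S \subset X -> connected_in S r -> connected_in (closed_nbhd S) e.
Proof.
move=> SX cS.
have from_S z : z \in closed_nbhd S ->
    exists2 s, s \in S & exists p, walk_in (closed_nbhd S) e s z p.
  rewrite inE => /orP[zS | /[!inE] /existsP[s /andP[sS sz]]].
    by exists z => //; exists [::]; rewrite walk_in_nil // inE zS.
  exists s => //; exists [:: z]; apply: (walk_in_cons _ sz); first by rewrite inE sS.
  by rewrite walk_in_nil // (closed_nbhd_edge sS sz).
move=> a b /from_S[sa saS [pa wa]] /from_S[sb sbS [pb wb]].
have [p wp] := cS sa sb saS sbS.
have [q wq _] := half_square_walk_lift SX (subsetUl _ _) (@closed_nbhd_edge S) wp.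
exists (rev (belast sa pa) ++ q ++ pb).
exact: walk_in_cat (walk_in_rev esym wa) (walk_in_cat wq wb).
Qed.

Lemma half_square_dh : distance_hereditary X r.
Proof.
move=> S SX cS u v uS vS d.
have [dS hdS] := is_dist_exists (cS u v uS vS).
have [dX hdX] : exists d, is_dist X r u v d.
  by have [p wp] := cS u v uS vS; apply: is_dist_exists; exists p; apply: walk_in_sub wp.
have GS := is_dist_half_square SX (subsetUl _ _) (closed_nbhd_side SX) (@closed_nbhd_edge S) uS hdS.
have GX : is_dist [set: T] e u v dX.*2.
  by apply: is_dist_half_square hdX; rewrite ?subsetT ?setIT ?(subsetP SX).
have NS := connected_in_closed_nbhd SX cS.
have {}GS := (dhG (subsetT _) NS (subsetP (subsetUl _ _) _ uS)
  (subsetP (subsetUl _ _) _ vS) _).1 GS.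
have dSX : dS = dX by apply: double_inj; apply: is_dist_uniq GS GX.
by split=> hd; [rewrite (is_dist_uniq hd hdS) dSX | rewrite (is_dist_uniq hd hdX) -dSX].
Qed.

Section CycleLinks.
Variables (c : seq T) (x0 : T).
Hypotheses (chc : chordless_cycle X r c) (c4 : 4 <= size c).
Local Notation n := (size c).
Local Notation x i := (nth x0 c i).

Lemma cycle_nth_in i : i < n -> x i \in X.
Proof. by case/and4P: chc => _ /allP cX _ _ hi; apply/cX/mem_nth. Qed.

Lemma cycle_link i : i < n.-1 -> exists y, e (x i) y && e y (x i.+1).
Proof.
move=> hi; have [hi1 hi2] : i < n /\ i.+1 < n by lia.
by have := cycle_nth_rel x0 chc hi1; rewrite hi2 r_half ?cycle_nth_in // => /andP[_ /existsP].
Qed.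

Definition cycle_links : {set T} :=
  [set z | (z \in c) || [exists i : 'I_n.-1, e (x i) z && e z (x i.+1)]].

Lemma cycle_links_nth i : i < n -> x i \in cycle_links.
Proof. by move=> hi; rewrite inE mem_nth. Qed.

Lemma cycle_links_link (i : 'I_n.-1) y :
  e (x i) y -> e y (x i.+1) -> y \in cycle_links.
Proof. by move=> iy yi; rewrite inE; apply/orP; right; apply/existsP; exists i; rewrite iy. Qed.

Lemma cycle_links_connected : connected_in cycle_links e.
Proof.
have to_last k i : i + k = n.-1 -> exists p, walk_in cycle_links e (x i) (x n.-1) p.
  elim: k i => [|k IH] i hik.
    by exists [::]; rewrite -hik addn0 walk_in_nil // cycle_links_nth //; lia.
  have hi : i < n.-1 by lia.
  have [y /andP[iy yi]] := cycle_link hi.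
  have [p wp] := IH i.+1 ltac:(lia).
  exists (y :: x i.+1 :: p); apply: (walk_in_cons (cycle_links_nth _) iy); first by lia.
  exact: walk_in_cons (@cycle_links_link (Ordinal hi) y iy yi) yi wp.
apply: (@connected_in_hub _ _ _ (x n.-1) esym) => z.
rewrite inE => /orP[zc | /existsP[i /andP[iz zi]]].
  have zn : index z c < n by rewrite index_mem.
  by have := to_last (n.-1 - index z c) (index z c); rewrite nth_index //; apply; lia.
have [p wp] := to_last (n.-1 - i.+1) i.+1 ltac:(have := ltn_ord i; lia).
exists (x i.+1 :: p); exact: walk_in_cons (cycle_links_link iz zi) zi wp.
Qed.

Lemma cycle_links_closing : exists2 y, y \in cycle_links & e (x n.-1) y && e y (x 0).
Proof.
have [hn hn0] : n.-1 < n /\ 0 < n by lia.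
have [y /andP[ly y0]] : exists y, e (x n.-1) y && e y (x 0).
  have := cycle_nth_rel x0 chc hn; rewrite ifF; last by lia.
  by rewrite r_half ?cycle_nth_in // => /andP[_ /existsP].
have wG : walk_in [set: T] e (x n.-1) (x 0) [:: y; x 0].
  by apply: walk_in_cons ly _; rewrite ?inE //; apply: walk_in_cons y0 _; rewrite ?walk_in_nil ?inE.
have [d hd] : exists d, is_dist [set: T] e (x n.-1) (x 0) d.
  by apply: is_dist_exists; exists [:: y; x 0].
have d2 : d <= 2 := hd.2 _ wG.
have [[p [wp sp]] _] := (dhG (subsetT _) cycle_links_connected
  (cycle_links_nth hn) (cycle_links_nth hn0) d).2 hd.
case: p wp sp => [|w [|w' [|w'' p]]] wp sp; last by move: sp d2 => /= <-.
all: case/and3P: wp => /= pw Sp /eqP lp.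
- by have := nth_cycle_inj chc hn hn0 lp; lia.
- by move: pw; rewrite andbT lp => /(edge_from_X (cycle_nth_in hn)); rewrite cycle_nth_in.
- by move: pw Sp lp => /and3P[lw ww' _] /and3P[_ wS _] <-; exists w => //; rewrite lw.
Qed.

Lemma cycle_common_nbr j k y : j < n -> k < n -> j != k ->
  e (x j) y -> e (x k) y -> r (x j) (x k).
Proof.
move=> hj hk jk jy ky.
apply: (common_nbr_half_square (cycle_nth_in hj) (cycle_nth_in hk) _ jy); last by rewrite esym.
by apply: contra jk => /eqP /(nth_cycle_inj chc hj hk) ->.
Qed.

End CycleLinks.

Lemma half_square_chordal : chordal X r.
Proof.
case=> [//|x0 s] c4; apply/negP => chc; set c := x0 :: s in chc c4 *.
have /and4P[_ /allP cX _ _] := chc.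
have [hn h0n] : (size c).-1 < size c /\ 0 < (size c).-1 by lia.
have [w] := cycle_links_closing x0 chc c4.
rewrite inE => /orP[wc | /existsP[i /andP[iw wi]]] /andP[lw w0].
  by have := edge_from_X (cycle_nth_in x0 chc hn) lw; rewrite cX.
have adj j k : j < k -> k < size c ->
    e (nth x0 c j) w -> e (nth x0 c k) w -> r (nth x0 c j) (nth x0 c k).
  move=> jk kn; apply: (cycle_common_nbr chc (ltn_trans jk kn) kn).
  by rewrite neq_ltn jk.
have e0 : e (nth x0 c 0) w by rewrite esym.
have ei1 : e (nth x0 c i.+1) w by rewrite esym.
have hi := ltn_ord i.
case: (ltnP i.+1 (size c).-1) => hi1.
  have hi2 := ltn_trans hi1 hn.
  exact: (chordless_cycle_no_triangle chc c4 (ltn0Sn i) hi1 hn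
    (adj _ _ (ltn0Sn i) hi2 e0 ei1) (adj _ _ hi1 hn ei1 lw) (adj _ _ h0n hn e0 lw)).
have i0 : 0 < i by lia.
exact: (chordless_cycle_no_triangle chc c4 i0 hi hn
  (adj _ _ i0 (ltn_trans hi hn) e0 iw) (adj _ _ hi hn iw lw) (adj _ _ h0n hn e0 lw)).
Qed.

End HalfSquare.

Lemma ptolemaic_two_sections (T : finType) (e : rel T) (X : {set T}) :
  symmetric e -> bipartition e X -> distance_hereditary [set: T] e ->
  ptolemaic X (two_section (nbhd_hyp e (~: X))) /\
  ptolemaic X (two_section (hyp_up (nbhd_hyp e (~: X)))).
Proof.
move=> esym bip dhG.
have half u v := @two_section_nbhd_hyp T e X u v esym bip.
have half_up u v : u \in X -> v \in X ->
    two_section (hyp_up (nbhd_hyp e (~: X))) u v = half_square e u v.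
  by move=> uX vX; rewrite two_section_hyp_up half.
split; split.
- exact: half_square_chordal esym bip dhG half.
- exact: half_square_dh esym bip dhG half.
- exact: half_square_chordal esym bip dhG half_up.
- exact: half_square_dh esym bip dhG half_up.
Qed.

Theorem proposition2 (T : finType) (e : rel T) (X Y : {set T}) :
  simple_graph e ->
  Y = ~: X ->
  bipartition e X ->
  distance_hereditary [set: T] e ->
  [/\ ptolemaic X (two_section (nbhd_hyp e Y)),
      ptolemaic X (two_section (hyp_up (nbhd_hyp e Y))),
      ptolemaic Y (two_section (nbhd_hyp e X)) &
      ptolemaic Y (two_section (hyp_up (nbhd_hyp e X)))].
Proof.
move=> [esym _] -> bip dhG.
have bipC : bipartition e (~: X).
  by move=> u v /bip; rewrite !in_setC; case: (u \in X); case: (v \in X).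
have [ptX ptX_up] := ptolemaic_two_sections esym bip dhG.
have [ptY ptY_up] := ptolemaic_two_sections esym bipC dhG.
by rewrite setCK in ptY ptY_up.
Qed.
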